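(* Let $n$ be a positive integer and $d\in\Delta(n)$. Write $d=(d_1,\dots,d_L)$ with $d_L>0$ its last nonzero entry and let $q=\max_k d_k$, so that $d=(1,2,\dots,q,d_{q+1},\dots,d_L)$ with $d_{q+1}\le q$. Set $b_i=d_i-d_{i+1}$ for $q\le i<L$ and $b_L=d_L$. Then \[\big|\,[\,d\,]_q\,\big|=\big|\,[\,d\,]\cap\mathcal{P}(n,q)\,\big|=\prod_{i=q}^{L-1}\binom{b_i+b_{i+1}}{b_i},\] where an empty product equals $1$.
   Context: A partition of a positive integer $n$ is a finite non-increasing sequence $\alpha=(\alpha_1,\dots,\alpha_l)$ of positive integers with sum $n$; $\mathcal{P}(n)$ is the set of partitions of $n$, $\alpha_i=0$ for $i>l$, and $\mathcal{P}(n,k)$ is the set of partitions of $n$ with exactly $k$ nonzero parts. The diagonal sequence is $\delta(\alpha)=(d_k)_{k\ge1}$ with $d_k=|\{i:1\le i\le k,\ \alpha_i+i-1\ge k\}|$, trailing zeros omitted; $\Delta(n)=\{\delta(\alpha):\alpha\in\mathcal{P}(n)\}$, $[\,d\,]=\{\alpha\in\mathcal{P}(n):\delta(\alpha)=d\}$, and $[\,d\,]_k=[\,d\,]\cap\mathcal{P}(n,k)$. *)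

From mathcomp Require Import all_boot.
Set Implicit Arguments. Unset Strict Implicit. Unset Printing Implicit Defensive.

(* A partition of n: a finite non-increasing sequence of positive integers
   with sum n.  alpha_i (1-based) is nth 0 a (i-1), and alpha_i = 0 for i > l. *)
Definition is_partition (n : nat) (a : seq nat) : bool :=
  [&& all (fun x => 0 < x) a, sorted geq a & sumn a == n].

Definition is_partition_k (n k : nat) (a : seq nat) : bool :=
  is_partition n a && (size a == k).

Definition diag_entry (a : seq nat) (k : nat) : nat :=
  count (fun i => k <= nth 0 a i.-1 + i.-1) (iota 1 k).

Fixpoint rtrim (s : seq nat) : seq nat :=
  match s with
  | [::] => [::]
  | x :: s' => let t := rtrim s' in
               if (t == [::]) && (x == 0) then [::] else x :: t
  end.

(* diagonal sequence delta(alpha) = (d_1, d_2, ...), trailing zeros omitted.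
   d_k = 0 for k > sumn a (since alpha_i + i - 1 <= sumn a), so it suffices
   to compute d_1 .. d_(sumn a). *)
Definition delta (a : seq nat) : seq nat :=
  rtrim [seq diag_entry a k | k <- iota 1 (sumn a)].

Definition in_Delta (n : nat) (d : seq nat) : Prop :=
  exists a, is_partition n a /\ delta a = d.

Definition card_is (P : seq nat -> Prop) (N : nat) : Prop :=
  exists s : seq (seq nat), [/\ uniq s, size s = N & forall a, a \in s <-> P a].

From mathcomp Require Import all_boot zify.
Set Implicit Arguments. Unset Strict Implicit. Unset Printing Implicit Defensive.

(* For a partition alpha put e_j = alpha_(j+1) + j, so that d_k = #{j < k | e_j >= k}.
   The sequence d can only increase while d_k = k, hence its maximum q satisfies d_q = q;
   for alpha with q parts this forces every e_j >= q, and then d_k = #{j | e_j >= k} for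
   k >= q.  So alpha is in [d]_q iff each value i occurs b_i times in e = (e_0, ..., e_(q-1)),
   and alpha is non-increasing iff e rises by at most one at each step.  Such sequences
   with prescribed multiplicities are counted by inserting the copies of i+1 into one on
   the values <= i: a run of (i+1)'s either starts the sequence or follows an i, so the
   insertions are the words with b_i letters i and b_(i+1) letters i+1. *)

Lemma card_is_image (T : eqType) (s : seq T) (f : T -> seq nat) (g : seq nat -> T)
    (P : seq nat -> Prop) :
  uniq s -> {in s, cancel f g} -> {in s, forall x, P (f x)} ->
  (forall a, P a -> g a \in s /\ f (g a) = a) -> card_is P (size s).
Proof.
move=> s_uniq fK Pf Pg; exists (map f s); split.
- by rewrite (map_inj_in_uniq (can_in_inj fK)).
- by rewrite size_map.
- move=> a; split => [/mapP [x xs ->] | Pa]; first exact: Pf.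
  by have [gs <-] := Pg a Pa; apply: map_f.
Qed.

Lemma card_is_bij (P Q : seq nat -> Prop) (f g : seq nat -> seq nat) (N : nat) :
  card_is P N -> (forall a, P a -> Q (f a) /\ g (f a) = a) ->
  (forall a, Q a -> P (g a) /\ f (g a) = a) -> card_is Q N.
Proof.
move=> [s [s_uniq <- memP]] PQ QP; apply: (@card_is_image _ s f g) => //.
- by move=> a /memP /PQ [].
- by move=> a /memP /PQ [].
- by move=> a /QP [/memP].
Qed.

Fixpoint words (n k : nat) : seq (seq bool) :=
  if n is n'.+1 then
    [seq true :: w | w <- if k is k'.+1 then words n' k' else [::]] ++
    [seq false :: w | w <- words n' k]
  else if k is 0 then [:: [::]] else [::].

Lemma size_words n k : size (words n k) = 'C(n, k).
Proof.
elim: n k => [|n IHn] [|k] //=; first by rewrite size_map IHn !bin0.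
by rewrite size_cat !size_map !IHn binS addnC.
Qed.

Lemma mem_map_cons (b c : bool) (w : seq bool) (l : seq (seq bool)) :
  (b :: w \in [seq c :: v | v <- l]) = (b == c) && (w \in l).
Proof.
by apply/mapP/andP => [[v vl [-> ->]] | [/eqP -> wl]]; [split | exists w].
Qed.

Lemma mem_words n k w : (w \in words n k) = (size w == n) && (count id w == k).
Proof.
elim: n k w => [|n IHn] k [|b w] /=; try by case: k.
- by rewrite mem_cat; case: k => [|k]; apply/norP; split; apply/mapP => -[].
- rewrite mem_cat !mem_map_cons eqSS; case: k => [|k]; case: b;
    by rewrite /= ?IHn ?add1n ?eqSS ?andbF ?orbF.
Qed.

Lemma uniq_words n k : uniq (words n k).
Proof.
have cons_inj (b : bool) : injective (cons b) by move=> ? ? [].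
elim: n k => [|n IHn] [|k] //=; first by rewrite map_inj_uniq.
rewrite cat_uniq !map_inj_uniq // !IHn /=.
by rewrite andbT; apply/hasPn => _ /mapP [w _ ->]; rewrite mem_map_cons.
Qed.

Lemma count_leq_split k (s : seq nat) :
  count (leq k) s = count_mem k s + count (leq k.+1) s.
Proof.
elim: s => //= x s ->; rewrite addnACA; congr (_ + _).
by case: ltngtP.
Qed.

Lemma all_geq_count_mem T (s : seq nat) :
  (forall x, T < x -> count_mem x s = 0) -> all (geq T) s.
Proof.
move=> sT; apply/allP => x xs; rewrite /= leqNgt.
by apply: contraTN xs => /sT/count_memPn.
Qed.

Lemma count_leq_telescope (e : seq nat) (f : nat -> nat) k0 N :
  (forall x, k0 <= x -> count_mem x e + f x.+1 = f x) -> (forall x, N <= x -> f x = 0) ->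
  forall k, k0 <= k -> count (leq k) e = f k.
Proof.
move=> ef fN.
have top k : maxn k0 N <= k -> count (leq k) e = 0.
  move=> kmax; apply/eqP; rewrite -leqn0 leqNgt -has_count; apply/hasPn => y ye /=.
  apply: contraTN ye => ky; apply/count_memPn; have := ef y _; rewrite !fN; lia.
suff grow : forall m k, k0 <= k -> maxn k0 N <= k + m -> count (leq k) e = f k.
  by move=> k k0k; apply: (grow (maxn k0 N) k k0k); rewrite leq_addl.
elim=> [|m IHm] k k0k; first by rewrite addn0 => kmax; rewrite top ?fN //; lia.
by move=> kmax; rewrite count_leq_split IHm ?ef //; lia.
Qed.

Definition rise1 (x y : nat) := y <= x.+1.

Lemma path_rise1_top x s : all (geq x.+1) s -> sorted rise1 s -> path rise1 x s.
Proof. by case: s => //= y s /andP [yx _] ->; rewrite andbT. Qed.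

Section InsertTop.

Variable T : nat.

Fixpoint insert_top (w : seq bool) (s : seq nat) : seq nat :=
  match w with
  | [::] => s
  | true :: w' => let i := index T s in take i s ++ T :: insert_top w' (drop i.+1 s)
  | false :: w' => T.+1 :: insert_top w' s
  end.

Definition top_word (e : seq nat) : seq bool := [seq x == T | x <- e & T <= x].

Lemma insert_top_lower w p r : all (gtn T) p ->
  insert_top (true :: w) (p ++ T :: r) = p ++ T :: insert_top w r.
Proof.
move=> pT; have Tp : T \notin p by apply/negP => /(allP pT); rewrite /= ltnn.
by rewrite /= (index_pivot r Tp) take_size_cat // drop_cat ltnNge leqnSn subSnn /= drop0.
Qed.

Lemma insert_top_cons w x s : x != T -> head true w ->
  insert_top w (x :: s) = x :: insert_top w s.
Proof. by move=> xT; case: w => [|[] w] //= _; rewrite (negbTE xT). Qed.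

Lemma split_top s k : all (geq T) s -> count_mem T s = k.+1 ->
  exists p r, [/\ s = p ++ T :: r, all (gtn T) p, all (geq T) r & count_mem T r = k].
Proof.
move=> sT sk; have Ts : T \in s by rewrite -has_pred1 has_count sk.
exists (take (index T s) s), (drop (index T s).+1 s).
have s_pr : s = take (index T s) s ++ T :: drop (index T s).+1 s.
  by rewrite -drop_index // cat_take_drop.
have Tp : T \notin take (index T s) s by rewrite in_take // ltnn.
move: sT sk; rewrite [in all _ _]s_pr [in count_mem _ _]s_pr all_cat count_cat /= eqxx.
rewrite (count_memPn Tp) add0n add1n.
case/and3P=> pT _ rT [rk]; split => //; apply/allP => x xp.
have /= := allP pT x xp; rewrite ltn_neqAle => ->; rewrite andbT.
by apply: contraNneq Tp => xT; move: xp; rewrite xT.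
Qed.

Lemma top_word_cons x e :
  top_word (x :: e) = if T <= x then (x == T) :: top_word e else top_word e.
Proof. by rewrite /top_word /=; case: ifP. Qed.

Lemma top_word_cat s t : top_word (s ++ t) = top_word s ++ top_word t.
Proof. by rewrite /top_word filter_cat map_cat. Qed.

Lemma top_word_lower s : all (gtn T) s -> top_word s = [::].
Proof. by elim: s => //= x s IHs /andP [xT /IHs]; rewrite top_word_cons leqNgt xT. Qed.

Lemma all_gtn_notin s : all (geq T) s -> T \notin s -> all (gtn T) s.
Proof.
move=> sT Ts; apply/allP => x xs; have /= := allP sT x xs.
by rewrite leq_eqVlt => /predU1P [xT | //]; move: Ts; rewrite -xT xs.
Qed.

Lemma perm_insert_top w s : all (geq T) s -> count_mem T s = count id w ->
  perm_eq (insert_top w s) (s ++ nseq (count negb w) T.+1).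
Proof.
elim: w s => [|[] w IHw] s sT; first by rewrite cats0.
- case/(split_top sT) => p [r [-> pT rT rw]].
  by rewrite insert_top_lower // -catA perm_cat2l /= perm_cons IHw.
- rewrite /= add0n => sw; rewrite perm_sym (perm_catCA s [:: T.+1]) /= perm_cons perm_sym.
  exact: IHw.
Qed.

Lemma filter_insert_top w s : all (geq T) s -> count_mem T s = count id w ->
  filter (predC1 T.+1) (insert_top w s) = s.
Proof.
have below u : all (geq T) u -> filter (predC1 T.+1) u = u.
  by move=> uT; apply/all_filterP; apply: sub_all uT => x /= xT; rewrite neq_ltn ltnS xT.
elim: w s => [|[] w IHw] s sT; first by rewrite below.
- case/(split_top sT) => p [r [-> pT rT rw]].
  rewrite insert_top_lower // filter_cat /= ltn_eqF // IHw // below //.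
  by apply: sub_all pT => x /= /ltnW.
- by rewrite /= add0n eqxx => /IHw ->.
Qed.

Lemma top_word_insert_top w s : all (geq T) s -> count_mem T s = count id w ->
  top_word (insert_top w s) = w.
Proof.
elim: w s => [|[] w IHw] s sT.
- by move/count_memPn => Ts; rewrite top_word_lower // all_gtn_notin.
- case/(split_top sT) => p [r [-> pT rT rw]].
  by rewrite insert_top_lower // top_word_cat top_word_lower // top_word_cons leqnn eqxx IHw.
- by rewrite /= add0n top_word_cons leqnSn (gtn_eqF (ltnSn T)) => /IHw ->.
Qed.

Lemma path_insert_top w s x : all (geq T) s -> count_mem T s = count id w ->
  T <= x -> path rise1 x s -> path rise1 x (insert_top w s).
Proof.
elim: w s x => [|[] w IHw] s x sT //.
- case/(split_top sT) => p [r [-> pT rT rw]] Tx.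
  rewrite insert_top_lower // !cat_path /= => /and3P [-> -> rpath] /=.
  exact: IHw.
- rewrite /= add0n => sw Tx xs; rewrite /rise1 ltnS Tx /=.
  apply: IHw => //; apply: path_rise1_top (path_sorted xs).
  by apply: sub_all sT => y /= /leqW /leqW.
Qed.

Lemma sorted_insert_top w s : all (geq T) s -> count_mem T s = count id w ->
  sorted rise1 s -> sorted rise1 (insert_top w s).
Proof.
move=> sT sw ss; apply: (@path_sorted _ _ T.+1); apply: path_insert_top => //.
by apply: path_rise1_top ss; apply: sub_all sT => y /= /leqW /leqW.
Qed.

Lemma path_filter_top e x : x <= T.+1 -> all (geq T.+1) e -> path rise1 x e ->
  path rise1 (minn x T) (filter (predC1 T.+1) e).
Proof.
elim: e x => //= y e IHe x xT /andP [yT eT] /andP [yx ye].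
have := IHe y yT eT ye; rewrite /rise1 in yx.
case: (ltngtP y T.+1) yT => [yT' | // | yT1] _ /=.
- have -> : minn y T = y by lia.
  by move=> ->; rewrite andbT /rise1; lia.
- by have -> : minn x T = minn y T by lia.
Qed.

Lemma sorted_filter_top e : all (geq T.+1) e -> sorted rise1 e ->
  sorted rise1 (filter (predC1 T.+1) e).
Proof.
case: e => //= x e /andP [xT eT] xe; have := path_filter_top xT eT xe.
case: (eqVneq x T.+1) => [_ | xT1] /=; first exact: path_sorted.
by have -> : minn x T = x by lia.
Qed.

Lemma head_top_word e x : path rise1 x e -> x < T -> head true (top_word e).
Proof.
elim: e x => //= y e IHe x /andP [yx ye] xT; rewrite top_word_cons.
case: leqP => [Ty | yT]; last exact: IHe ye yT.
have -> : y = T by move: yx; rewrite /rise1; lia.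
by rewrite /= eqxx.
Qed.

Lemma insert_top_word e : all (geq T.+1) e -> sorted rise1 e ->
  insert_top (top_word e) (filter (predC1 T.+1) e) = e.
Proof.
elim: e => //= x e IHe /andP [xT eT] xe.
have {}IHe := IHe eT (path_sorted xe); rewrite top_word_cons.
case: (ltngtP x T) => [xlt | xgt | ->].
- rewrite ltn_eqF ?(ltn_trans xlt) //= insert_top_cons ?ltn_eqF ?IHe //.
  exact: head_top_word xe xlt.
- have -> : x = T.+1 by apply/eqP; rewrite eqn_leq xT xgt.
  by rewrite eqxx /= IHe.
- by rewrite /= (ltn_eqF (ltnSn T)) /= eqxx /= drop0 IHe.
Qed.

Lemma count_top_word e : count id (top_word e) = count_mem T e.
Proof.
rewrite /top_word count_map count_filter; apply: eq_count => x /=.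
by case: eqP => // ->; rewrite leqnn.
Qed.

Lemma size_top_word e : all (geq T.+1) e ->
  size (top_word e) = count_mem T e + count_mem T.+1 e.
Proof.
move=> eT; rewrite size_map size_filter (count_leq_split T) (count_leq_split T.+1) addnA.
rewrite [count (leq _.+2) _](@eq_in_count _ _ pred0) ?count_pred0 ?addn0 //.
by move=> y /(allP eT) /= yT; rewrite ltnNge yT.
Qed.

End InsertTop.

Definition rise1_mults (c : nat -> nat) (e : seq nat) : Prop :=
  sorted rise1 e /\ forall x, count_mem x e = c x.

Section InsertTopMults.

Variables (c : nat -> nat) (T : nat).
Hypothesis c_top : forall x, T.+1 < x -> c x = 0.

Let c_below x := if x <= T then c x else 0.

Lemma rise1_mults_below s : rise1_mults c_below s -> all (geq T) s /\ count_mem T s = c T.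
Proof.
case=> _ sc; split; last by rewrite sc /c_below leqnn.
by apply: all_geq_count_mem => x Tx; rewrite sc /c_below leqNgt Tx.
Qed.

Lemma rise1_mults_bound e : rise1_mults c e -> all (geq T.+1) e.
Proof. by case=> _ ec; apply: all_geq_count_mem => x Tx; rewrite ec c_top. Qed.

Lemma rise1_mults_insert_top w s : rise1_mults c_below s ->
  size w = c T + c T.+1 -> count id w = c T -> rise1_mults c (insert_top T w s).
Proof.
move=> s_mults w_size w_count; have [sT sc] := rise1_mults_below s_mults.
have sw : count_mem T s = count id w by rewrite sc.
split; first by apply: sorted_insert_top => //; case: s_mults.
move=> x; rewrite (permP (perm_insert_top sT sw)) count_cat count_nseq /=.
have -> : count negb w = c T.+1.
  by apply/eqP; rewrite -(eqn_add2l (c T)) -w_size -w_count -(count_predC id).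
case: s_mults => _ ->; rewrite /c_below eq_sym.
case: (ltngtP x T.+1) => [xT | Tx | ->] /=; last by rewrite ltnn mul1n.
- by rewrite -ltnS xT mul0n addn0.
- by rewrite leqNgt (ltn_trans (ltnSn T) Tx) (c_top Tx).
Qed.

Lemma insert_topK w s : rise1_mults c_below s -> count id w = c T ->
  filter (predC1 T.+1) (insert_top T w s) = s /\ top_word T (insert_top T w s) = w.
Proof.
move=> /rise1_mults_below [sT sc] w_count; rewrite -w_count in sc.
by rewrite filter_insert_top // top_word_insert_top.
Qed.

Lemma rise1_mults_filter_top e : rise1_mults c e ->
  [/\ rise1_mults c_below (filter (predC1 T.+1) e),
      size (top_word T e) = c T + c T.+1 & count id (top_word T e) = c T].
Proof.
move=> e_mults; have eT := rise1_mults_bound e_mults; case: e_mults => e_sorted ec.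
rewrite size_top_word // count_top_word !ec; split => //.
split; first exact: sorted_filter_top.
move=> x; rewrite count_filter /c_below.
case: (ltngtP x T.+1) => [xT | Tx | ->].
- rewrite -ltnS xT -ec; apply: eq_count => y /=.
  by case: (eqVneq y x) => //= ->; rewrite ltn_eqF.
- rewrite leqNgt (ltn_trans (ltnSn T) Tx) /=; apply/eqP.
  by rewrite -leqn0 -(c_top Tx) -ec; apply: sub_count => y /andP [].
- by rewrite ltnn (@eq_count _ _ pred0) ?count_pred0 // => y /=; case: eqP.
Qed.

Lemma card_rise1_mults_succ N : card_is (rise1_mults c_below) N ->
  card_is (rise1_mults c) (N * 'C(c T + c T.+1, c T)).
Proof.
move=> [S [S_uniq <- S_mem]].
set W := words (c T + c T.+1) (c T).
have in_pairs s w : (s, w) \in [seq (s, w) | s <- S, w <- W] ->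
    rise1_mults c_below s /\ size w = c T + c T.+1 /\ count id w = c T.
  case/allpairsP => -[s' w'] [/S_mem s_mults /= + [-> ->]].
  by rewrite mem_words => /andP [/eqP -> /eqP ->].
rewrite -(size_words (c T + c T.+1) (c T)) -(size_allpairs pair).
apply: (@card_is_image _ _ (fun p => insert_top T p.2 p.1)
                          (fun e => (filter (predC1 T.+1) e, top_word T e))).
- by apply: allpairs_uniq => //; [apply: uniq_words | move=> [? ?] [? ?] _ _ /= ->].
- move=> [s w] /in_pairs [s_mults [_ w_count]] /=.
  by case: (insert_topK s_mults w_count) => -> ->.
- by move=> [s w] /in_pairs [s_mults [w_size w_count]]; apply: rise1_mults_insert_top.
- move=> e e_mults; have [s_mults w_size w_count] := rise1_mults_filter_top e_mults.
  split; last by apply: insert_top_word (rise1_mults_bound e_mults) _; case: e_mults.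
  by apply: allpairs_f; [apply/S_mem | rewrite mem_words w_size w_count !eqxx].
Qed.

End InsertTopMults.

Lemma card_rise1_mults (c : nat -> nat) (T : nat) : (forall x, T < x -> c x = 0) ->
  card_is (rise1_mults c) (\prod_(i < T) 'C(c i + c i.+1, c i)).
Proof.
elim: T c => [|T IHT] c cT.
  exists [:: nseq (c 0) 0]; split => //; first by rewrite big_ord0.
  move=> e; rewrite inE; split => [/eqP -> | [_ ec]].
    split; first by elim: (c 0) => // -[|n].
    by case=> [|x]; rewrite count_nseq /= ?mul1n // mul0n cT.
  have e0 : all (pred1 0) e.
    have /allP e_le0 : all (geq 0) e by apply: all_geq_count_mem => x x0; rewrite ec cT.
    by apply/allP => x /e_le0; rewrite /= leqn0.
  by move: (e0); rewrite all_count -ec => /eqP ->; apply/eqP/all_pred1P.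
rewrite big_ord_recr /=; apply: card_rise1_mults_succ => //.
set c' := fun x => if x <= T then c x else 0.
rewrite (eq_bigr (fun i : 'I_T => 'C(c' i + c' i.+1, c' i))) => [|i _].
  by apply: IHT => x Tx; rewrite /c' leqNgt Tx.
by rewrite /c' (ltn_ord i) ltnW.
Qed.

Lemma nth_rtrim s i : nth 0 (rtrim s) i = nth 0 s i.
Proof.
elim: s i => [|x s IHs] i //=.
case: ifP => [/andP [/eqP s0 /eqP ->] | _]; last by case: i.
by case: i => [|i] //=; rewrite -IHs s0 nth_nil.
Qed.

Lemma last_rtrim s : last 1 (rtrim s) != 0.
Proof.
elim: s => [|x s IHs] //=.
by case: ifP => [// | /negbT]; case: (rtrim s) IHs.
Qed.

Lemma sumn_rtrim s : sumn (rtrim s) = sumn s.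
Proof.
elim: s => [|x s IHs] //=.
by case: ifP => [/andP [/eqP s0 /eqP ->] | _]; rewrite -IHs // s0.
Qed.

Lemma eq_from_nth0 s t : last 1 s != 0 -> last 1 t != 0 ->
  (forall i, nth 0 s i = nth 0 t i) -> s = t.
Proof.
have size_le u v : last 1 u != 0 -> (forall i, nth 0 u i = nth 0 v i) ->
    size u <= size v.
  move=> u_last uv; rewrite leqNgt; apply/negP => vu.
  case/lastP: u u_last uv vu => // u x; rewrite last_rcons size_rcons ltnS => x0 uv vu.
  have := uv (size u); rewrite nth_rcons ltnn eqxx nth_default // => x_0.
  by rewrite x_0 in x0.
move=> s_last t_last st; apply: (@eq_from_nth _ 0) => [|i _]; last exact: st.
by apply/eqP; rewrite eqn_leq !size_le // => i; rewrite st.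
Qed.

Definition levels (a : seq nat) (k : nat) : seq nat := mkseq (fun j => nth 0 a j + j) k.

Definition diag (a : seq nat) (k : nat) : nat := count (leq k) (levels a k).

Lemma diag_entryE a k : diag_entry a k = diag a k.
Proof. by rewrite /diag_entry /diag /levels count_map -[1]/(1 + 0) iotaDl count_map. Qed.

Lemma diag_le a k : diag a k <= k.
Proof. by rewrite -[leqRHS](size_mkseq (fun j => nth 0 a j + j)) count_size. Qed.

Lemma diag_small a k : (forall j, j < k -> k <= nth 0 a j + j) -> diag a k = k.
Proof.
move=> ak; apply/eqP; rewrite -[X in _ == X](size_mkseq (fun j => nth 0 a j + j)).
by rewrite -all_count; apply/allP => y /mapP [j]; rewrite mem_iota => /andP [_ /ak kj ->].
Qed.

Lemma diag_cons x a k : diag (x :: a) k.+1 = (k < x) + diag a k.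
Proof.
rewrite /diag /levels /mkseq /= -[1]/(1 + 0) iotaDl -map_comp !count_map addn0.
by congr (_ + _); apply: eq_count => j /=; rewrite add1n addnS ltnS.
Qed.

Lemma diag_eq0 a k : all (fun x => 0 < x) a -> sumn a < k -> diag a k = 0.
Proof.
elim: a k => [|x a IHa] [|k] //=.
  move=> _ _; apply/eqP; rewrite -leqn0 leqNgt -has_count; apply/hasPn => y /mapP [j].
  by rewrite mem_iota nth_nil => /andP [_ jk] ->; rewrite /= -ltnNge.
case/andP=> x0 a0 ak; rewrite diag_cons IHa //; last by lia.
by rewrite addn0; case: (ltnP k x) => // kx; lia.
Qed.

Lemma nth_delta a k : all (fun x => 0 < x) a -> nth 0 (delta a) k = diag a k.+1.
Proof.
move=> a0; rewrite /delta nth_rtrim; case: (ltnP k (sumn a)) => ka.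
  by rewrite (nth_map 0) ?size_iota // nth_iota // diag_entryE add1n.
by rewrite nth_default ?size_map ?size_iota // diag_eq0.
Qed.

Lemma delta_eq_diag a d : all (fun x => 0 < x) a -> last 1 d != 0 ->
  delta a = d <-> forall k, diag a k.+1 = nth 0 d k.
Proof.
move=> a0 d_last; split => [<- k | ad]; first by rewrite nth_delta.
by apply: eq_from_nth0 (last_rtrim _) d_last _ => k; rewrite nth_delta.
Qed.

Lemma sum_ltn x N : \sum_(k < N) (k < x) = minn x N.
Proof.
elim: N => [|N IHN]; first by rewrite big_ord0 minn0.
by rewrite big_ord_recr /= IHN; case: (ltnP N x) => Nx /=; lia.
Qed.

Lemma sum_diag a N : all (fun x => 0 < x) a -> sumn a <= N ->
  \sum_(k < N) diag a k.+1 = sumn a.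
Proof.
elim: a N => [|x a IHa] N /=.
  by move=> _ _; apply: big1 => k _; apply: diag_eq0.
case/andP=> x0 a0 aN; under eq_bigr do rewrite diag_cons.
rewrite big_split /= sum_ltn; case: N aN => [|N] aN; first by lia.
by rewrite big_ord_recl -[diag a 0]/0 IHa //; lia.
Qed.

Lemma sumn_delta a : all (fun x => 0 < x) a -> sumn (delta a) = sumn a.
Proof.
move=> a0; rewrite /delta sumn_rtrim sumnE -[1]/(1 + 0) iotaDl -map_comp big_map.
rewrite -{1}(subn0 (sumn a)) -/(index_iota 0 _) big_mkord -[RHS](sum_diag a0 (leqnn _)).
by apply: eq_bigr => k _; rewrite /= diag_entryE.
Qed.

Lemma sorted_geq_nth a i : sorted geq a -> nth 0 a i.+1 <= nth 0 a i.
Proof.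
move=> /sortedP a_sorted; case: (ltnP i.+1 (size a)) => ia; first exact: a_sorted.
by rewrite nth_default.
Qed.

Lemma diag_rise a k : sorted geq a -> diag a k < diag a k.+1 -> diag a k = k.
Proof.
move=> a_sorted rise; set f := fun j => nth 0 a j + j.
have dk : diag a k = count_mem k (levels a k) + count (leq k.+1) (levels a k).
  exact: count_leq_split.
have dk1 : diag a k.+1 = count (leq k.+1) (levels a k) + (k < f k).
  by rewrite /diag /levels mkseqS -cats1 count_cat /= addn0.
have /count_memPn k_notin : count_mem k (levels a k) = 0.
  by move: rise; rewrite dk dk1; case: (k < f k); rewrite /= ?addn0; lia.
have fk : k < f k.
  rewrite ltnNge; apply/negP => fk; move: rise.
  by rewrite dk dk1 [k < f k]ltnNge fk /= addn0; lia.
have above m : m <= k -> k < f (k - m).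
  elim: m => [|m IHm] mk; first by rewrite subn0.
  have fk_m : f (k - m.+1) != k.
    apply: contraNneq k_notin => fj; rewrite -{1}fj.
    by apply: map_f; rewrite mem_iota; lia.
  have := sorted_geq_nth (k - m.+1) a_sorted; have := IHm (ltnW mk).
  have -> : k - m = (k - m.+1).+1 by lia.
  by move: fk_m; rewrite /f; lia.
apply: diag_small => j jk; have := above (k - j) (leq_subr _ _).
by rewrite subKn ?(ltnW jk) // => /ltnW.
Qed.

Lemma diag_id_below a j k : sorted geq a -> k <= diag a j -> diag a k = k.
Proof.
move=> a_sorted; elim: j k => [|j IHj] k kj; first by move: kj; rewrite leqn0 => /eqP ->.
case: (ltnP (diag a j) (diag a j.+1)) => [rise | fall]; last exact: IHj (leq_trans kj fall).
have dj := diag_rise a_sorted rise.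
have dj1 : diag a j.+1 = j.+1 by have := diag_le a j.+1; lia.
case: (ltnP k j.+1) => kj1; first by apply: IHj; rewrite dj -ltnS.
by have -> : k = j.+1 by lia.
Qed.

Definition unlevel (e : seq nat) : seq nat := mkseq (fun j => nth 0 e j - j) (size e).

Lemma size_levels a k : size (levels a k) = k.
Proof. exact: size_mkseq. Qed.

Lemma nth_levels a k j : j < k -> nth 0 (levels a k) j = nth 0 a j + j.
Proof. exact: nth_mkseq. Qed.

Lemma unlevelK a : unlevel (levels a (size a)) = a.
Proof.
apply: (@eq_from_nth _ 0); rewrite size_mkseq size_levels // => j ja.
by rewrite nth_mkseq ?size_levels // nth_levels // addnK.
Qed.

Lemma levelsK e : (forall j, j < size e -> j <= nth 0 e j) ->
  levels (unlevel e) (size e) = e.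
Proof.
move=> e_ge; apply: (@eq_from_nth _ 0); rewrite size_levels // => j je.
by rewrite nth_levels // nth_mkseq // subnK // e_ge.
Qed.

Lemma diag_levels a k : size a <= k -> diag a k = count (leq k) (levels a (size a)).
Proof.
move=> ak; rewrite /diag /levels /mkseq -(subnKC ak) iotaD map_cat count_cat.
rewrite [X in _ + X](@eq_in_count _ _ pred0) ?count_pred0 ?addn0 // => y /mapP [j].
rewrite mem_iota => /andP [aj jk] ->; rewrite nth_default //=.
by apply/negbTE; rewrite -ltnNge; lia.
Qed.

Lemma sorted_levels a : sorted geq a -> sorted rise1 (levels a (size a)).
Proof.
move=> a_sorted; apply/(sortedP 0) => j; rewrite size_levels => ja.
rewrite !nth_levels ?(ltnW ja) // /rise1 addnS ltnS leq_add2r.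
exact: sorted_geq_nth.
Qed.

Lemma sorted_unlevel e : sorted rise1 e -> sorted geq (unlevel e).
Proof.
move=> /(sortedP 0) e_sorted; apply/(sortedP 0) => j; rewrite size_mkseq => je.
rewrite !nth_mkseq ?(ltnW je) //=; have := e_sorted j je; rewrite /rise1; lia.
Qed.

Lemma bigmax_mem0 (s : seq nat) : \max_(x <- s) x \in 0 :: s.
Proof.
rewrite big_seq; apply: (big_ind (fun m => m \in 0 :: s)) => [|x y | x xs].
- exact: mem_head.
- by rewrite /maxn; case: ifP.
- by rewrite inE xs orbT.
Qed.

Section DiagonalClass.

Variable a0 : seq nat.
Hypotheses (a0_pos : all (fun x => 0 < x) a0) (a0_sorted : sorted geq a0)
           (a0_nil : a0 != [::]).

Local Notation d := (delta a0).
Local Notation q := (\max_(x <- delta a0) x).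
Local Notation D := (diag a0).
Local Notation b := (fun i => nth 0 (delta a0) i.-1 - nth 0 (delta a0) i).

Lemma diag_le_max k : D k <= q.
Proof.
case: k => [|k] //; rewrite -nth_delta //.
case: (ltnP k (size d)) => kd; last by rewrite nth_default.
by apply: leq_bigmax_seq => //; apply: mem_nth.
Qed.

Lemma diag_id_upto_max k : k <= q -> D k = k.
Proof.
have [j Dj] : exists j, D j = q.
  case/predU1P: (bigmax_mem0 d) => [-> | /(nthP 0) [i _ <-]]; first by exists 0.
  by exists i.+1; rewrite -nth_delta.
by move=> kq; apply: (@diag_id_below _ j); rewrite ?Dj.
Qed.

Lemma max_delta_gt0 : 0 < q.
Proof.
have D1 : D 1 = 1.
  by case: a0 a0_pos a0_nil => // x a /andP [x0 _] _; rewrite diag_cons x0.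
by rewrite -D1 diag_le_max.
Qed.

Lemma diag_nonincr_from_max k : q <= k -> D k.+1 <= D k.
Proof.
move=> qk; rewrite leqNgt; apply/negP => rise.
by have := diag_rise a0_sorted rise; have := diag_le_max k.+1; lia.
Qed.

Lemma diag_eq0_after_size k : size d < k -> D k = 0.
Proof. by case: k => // k kd; rewrite -nth_delta // nth_default. Qed.

Lemma max_delta_le_size : q <= size d.
Proof.
rewrite leqNgt; apply/negP => dq; have := diag_id_upto_max (leqnn q).
by rewrite diag_eq0_after_size // => q0; move: max_delta_gt0; rewrite -q0.
Qed.

Lemma b_below_max k : k < q -> b k = 0.
Proof.
case: k => [|k] kq /=; first by rewrite subnn.
by rewrite !nth_delta // !diag_id_upto_max ?(ltnW kq) //; lia.
Qed.

Lemma b_add_diag k : q <= k -> b k + D k.+1 = D k.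
Proof.
case: k => [|k] qk; first by move: max_delta_gt0; lia.
by rewrite /= !nth_delta // subnK // diag_nonincr_from_max.
Qed.

Lemma count_leq_diag e : (forall x, count_mem x e = b x) ->
  forall k, q <= k -> count (leq k) e = D k.
Proof.
move=> eb; apply: (@count_leq_telescope _ _ _ (size d).+1) => x ?.
  by rewrite eb b_add_diag.
exact: diag_eq0_after_size.
Qed.

Lemma diag_eq_of_delta a : all (fun x => 0 < x) a -> delta a = d -> diag a =1 D.
Proof. by move=> a_pos ad [|k] //; rewrite -!nth_delta // ad. Qed.

Lemma rise1_mults_levels a : is_partition_k (sumn a0) q a -> delta a = d ->
  rise1_mults b (levels a q).
Proof.
case/andP=> /and3P [a_pos a_sorted _] /eqP a_size ad.
have count_ge k : q <= k -> count (leq k) (levels a q) = D k.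
  by move=> qk; rewrite -(diag_eq_of_delta a_pos ad) diag_levels ?a_size.
split; first by rewrite -a_size; apply: sorted_levels.
move=> x; case: (ltnP x q) => xq.
  have /allP L_ge : all (leq q) (levels a q).
    by rewrite all_count count_ge // diag_id_upto_max // size_levels.
  by rewrite b_below_max //; apply/count_memPn/negP => /L_ge; rewrite /= leqNgt xq.
apply/eqP; rewrite -(eqn_add2r (D x.+1)) b_add_diag // -(count_ge x.+1) ?(leqW xq) //.
by rewrite -count_leq_split count_ge.
Qed.

Lemma unlevel_class e : rise1_mults b e ->
  (is_partition_k (sumn a0) q (unlevel e) /\ delta (unlevel e) = d) /\
  levels (unlevel e) q = e.
Proof.
case=> e_sorted eb; have count_ge := count_leq_diag eb.
have e_ge : all (leq q) e.
  apply/allP => y ye; rewrite /= leqNgt; apply: contraTN ye => yq.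
  by apply/count_memPn; rewrite eb b_below_max.
have e_size : size e = q.
  apply/esym/eqP; rewrite -[X in X == _](diag_id_upto_max (leqnn q)).
  by rewrite -count_ge // -all_count.
have e_nth j : j < q -> q <= nth 0 e j.
  by move=> jq; apply: (allP e_ge); rewrite mem_nth // e_size.
set a := unlevel e.
have a_size : size a = q by rewrite size_mkseq.
have a_levels : levels a q = e.
  rewrite -e_size levelsK // => j; rewrite e_size => jq.
  exact: leq_trans (ltnW jq) (e_nth j jq).
have a_nth j : j < q -> nth 0 a j + j = nth 0 e j.
  by move=> jq; rewrite -(nth_levels a jq) a_levels.
have a_pos : all (fun x => 0 < x) a.
  apply/allP => x /mapP [j]; rewrite mem_iota e_size => /andP [_ jq] ->.
  by rewrite subn_gt0; apply: leq_trans jq (e_nth j jq).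
have ad : delta a = d.
  apply/delta_eq_diag => //; first exact: last_rtrim.
  move=> k; rewrite nth_delta //; case: (ltnP k.+1 q) => kq.
    rewrite diag_id_upto_max ?(ltnW kq) // diag_small // => j jk.
    have jq := ltn_trans jk kq.
    by rewrite a_nth // (leq_trans (ltnW kq)) ?e_nth.
  by rewrite diag_levels a_size ?a_levels ?count_ge.
split => //; split => //.
rewrite /is_partition_k /is_partition a_pos sorted_unlevel // a_size eqxx andbT /=.
by rewrite -sumn_delta // ad sumn_delta.
Qed.

Lemma card_diagonal_class :
  card_is (fun a => is_partition_k (sumn a0) q a /\ delta a = d)
          (\prod_(q <= i < size d) 'C(b i + b i.+1, b i)).
Proof.
have b_top x : size d < x -> b x = 0 by move=> dx; rewrite /= !nth_default //; lia.
have := card_rise1_mults b_top.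
rewrite -(big_mkord xpredT (fun i => 'C(b i + b i.+1, b i))).
rewrite (big_cat_nat (leq0n q) max_delta_le_size) /= big1_seq ?mul1n => [card | i].
  apply: (card_is_bij card (f := unlevel) (g := levels^~ q)) => [e /unlevel_class //|].
  move=> a [a_part ad]; split; first exact: rise1_mults_levels.
  by case/andP: a_part => _ /eqP <-; rewrite unlevelK.
by rewrite mem_index_iota => /andP [_ iq]; rewrite b_below_max // bin0.
Qed.

End DiagonalClass.

Theorem proposition4p4 (n : nat) (d : seq nat) :
  0 < n -> in_Delta n d ->
  let L := size d in
  let q := \max_(x <- d) x in
  let b := fun i => nth 0 d i.-1 - nth 0 d i in
  card_is (fun a => is_partition_k n q a /\ delta a = d)
          (\prod_(q <= i < L) 'C(b i + b i.+1, b i)).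
Proof.
move=> n_gt0 [a [/and3P [a_pos a_sorted /eqP a_sum] <-]]; rewrite -a_sum in n_gt0 *.
have a_nil : a != [::] by apply: contraTneq n_gt0 => ->.
exact: card_diagonal_class a_pos a_sorted a_nil.
Qed.
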